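(* Let $X$ be a nonempty set, $f:X\to X$ a function, and $\tau_1$ the fuzzy topology on $X$ defined below. Then $f:(X,\tau_1)\to(X,\tau_1)$ is onto if and only if $f$ is an open map.
   Context: A fuzzy subset of $X$ is a function $\mu:X\to[0,1]$; union is the pointwise supremum, intersection the pointwise minimum; $\emptyset$ is the constant $0$ and $X$ the constant $1$. A fuzzy topology is a family of fuzzy subsets containing $\emptyset$ and $X$, closed under arbitrary unions and finite intersections; the topology generated by a base $\mathbb{B}$ consists of $\emptyset$ and all unions of subfamilies of $\mathbb{B}$. $\mathbb{N}=\{1,2,\dots\}$, $f^{n+1}=f^n\circ f$. Definition of $\tau_1$: for $n\in\mathbb{N}$ let $\mathcal{A}_n$ be the fuzzy subset with $\mu_{\mathcal{A}_n}(x)=1$ if there exists $m\in\mathbb{N}$ with $f^m(x)=x$, and $\mu_{\mathcal{A}_n}(x)=1/n$ otherwise; $\tau_1$ is generated by the base $\{\mathcal{A}_n:n\in\mathbb{N}\}$. The image of a fuzzy set $A$ is $\mu_{f(A)}(y)=\sup\{\mu_A(x): f(x)=y\}$, and $\mu_{f(A)}(y)=0$ if $y\notin f(X)$. $f$ is open if $f(U)$ is open for every open fuzzy set $U$. *)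

From Stdlib Require Import Reals.
Open Scope R_scope.

Fixpoint iterf {X : Type} (f : X -> X) (m : nat) (x : X) : X :=
  match m with O => x | S k => f (iterf f k x) end.

Definition periodic {X : Type} (f : X -> X) (x : X) : Prop :=
  exists m : nat, (1 <= m)%nat /\ iterf f m x = x.

Definition is_fuzzy {X : Type} (mu : X -> R) : Prop :=
  forall x, 0 <= mu x <= 1.

(* supremum of a set of membership degrees, with sup of the empty set = 0
   (the value of the empty fuzzy set) *)
Definition fsup (E : R -> Prop) (s : R) : Prop :=
  ((exists r, E r) /\ is_lub E s) \/ ((~ exists r, E r) /\ s = 0).

(* membership degree of the basic fuzzy set A_n (n >= 1) at x *)
Definition A_val {X : Type} (f : X -> X) (n : nat) (x : X) (r : R) : Prop :=
  (periodic f x /\ r = 1) \/ (~ periodic f x /\ r = / INR n).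

(* open sets of tau_1: the empty fuzzy set, and all unions of subfamilies
   of the base {A_n : n in N} *)
Definition tau1_open {X : Type} (f : X -> X) (mu : X -> R) : Prop :=
  is_fuzzy mu /\
  ((forall x, mu x = 0) \/
   exists S : nat -> Prop, (forall n, S n -> (1 <= n)%nat) /\
     forall x, fsup (fun r => exists n, S n /\ A_val f n x r) (mu x)).

Definition fimage {X : Type} (f : X -> X) (mu nu : X -> R) : Prop :=
  forall y, fsup (fun r => exists x, f x = y /\ r = mu x) (nu y).

Definition tau1_open_map {X : Type} (f : X -> X) : Prop :=
  forall mu nu, tau1_open f mu -> fimage f mu nu -> tau1_open f nu.

(* Every tau_1-open set is constant on periodic points and on non-periodic points, with the
   periodic value the larger one.  Each periodic point is the image of a periodic point and a
   preimage of a non-periodic point is non-periodic, so for onto f the image f(mu) is mu itself.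
   Conversely the image of the whole space X = A_1 is the indicator of f(X); a nonzero open set
   is positive everywhere, so if this indicator is open then f(X) = X. *)
From Stdlib Require Import Reals Lra Lia Classical ClassicalEpsilon FunctionalExtensionality.
Open Scope R_scope.

Lemma fsup_unique (E : R -> Prop) s1 s2 : fsup E s1 -> fsup E s2 -> s1 = s2.
Proof.
  intros [[H1 [U1 M1]]|[H1 e1]] [[H2 [U2 M2]]|[H2 e2]]; try tauto; try lra.
  apply Rle_antisym; [apply M1 | apply M2]; assumption.
Qed.

Lemma fsup_ext (E E' : R -> Prop) s : (forall r, E r <-> E' r) -> fsup E s -> fsup E' s.
Proof.
  intros He [[[r Hr] [U M]]|[Hn e]].
  - left; split; [exists r; apply He, Hr|split].
    + intros x Hx; apply U, He, Hx.
    + intros b Hb; apply M; intros x Hx; apply Hb, He, Hx.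
  - right; split; [|exact e].
    intros [r Hr]; apply Hn; exists r; apply He, Hr.
Qed.

Lemma fsup_max (E : R -> Prop) s : E s -> (forall r, E r -> r <= s) -> fsup E s.
Proof.
  intros Es Hub; left; split; [exists s; exact Es|split; [exact Hub|]].
  intros b Hb; apply Hb, Es.
Qed.

Lemma fsup_ge (E : R -> Prop) s r : fsup E s -> E r -> r <= s.
Proof. intros [[_ [U _]]|[Hn _]] Er; [apply U, Er|exfalso; apply Hn; exists r; exact Er]. Qed.

Lemma fsup_inhabited (E : R -> Prop) s : fsup E s -> s <> 0 -> exists r, E r.
Proof. intros [[He _]|[_ ->]] Hs; [exact He|lra]. Qed.

Lemma iterf_S {X : Type} (f : X -> X) k x : iterf f (S k) x = iterf f k (f x).
Proof. induction k as [|k IH]; [reflexivity|simpl; rewrite <- IH; reflexivity]. Qed.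

Lemma periodic_f {X : Type} (f : X -> X) x : periodic f x -> periodic f (f x).
Proof.
  intros [m [Hm Hx]]; exists m; split; [exact Hm|].
  rewrite <- iterf_S; simpl; rewrite Hx; reflexivity.
Qed.

Lemma periodic_iterf {X : Type} (f : X -> X) k x : periodic f x -> periodic f (iterf f k x).
Proof. induction k as [|k IH]; [easy|intros Hx; simpl; apply periodic_f, IH, Hx]. Qed.

(* If f^(k+1) y = y then y = f (f^k y). *)
Lemma periodic_preimage {X : Type} (f : X -> X) y :
  periodic f y -> exists x, f x = y /\ periodic f x.
Proof.
  intros Py; destruct Py as [[|k] [Hm Hy]]; [lia|].
  exists (iterf f k y); split; [exact Hy|].
  apply periodic_iterf; exists (S k); split; assumption.
Qed.

Lemma surjective_preimage_same_periodicity {X : Type} (f : X -> X) y :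
  (forall y, exists x, f x = y) ->
  exists x, f x = y /\ (periodic f x <-> periodic f y).
Proof.
  intros Honto; destruct (classic (periodic f y)) as [Py|Py].
  - destruct (periodic_preimage f y Py) as [x [Hx Px]]; exists x; tauto.
  - destruct (Honto y) as [x Hx]; exists x; split; [exact Hx|].
    split; [intros Px; subst y; apply periodic_f, Px|tauto].
Qed.

Lemma A_val_1 {X : Type} (f : X -> X) x r : A_val f 1 x r <-> r = 1.
Proof.
  unfold A_val; simpl; rewrite Rinv_1.
  destruct (classic (periodic f x)); tauto.
Qed.

Lemma A_val_pos {X : Type} (f : X -> X) n x : (1 <= n)%nat -> exists r, A_val f n x r /\ 0 < r.
Proof.
  intros Hn; destruct (classic (periodic f x)) as [Px|Px].
  - exists 1; split; [left; tauto|lra].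
  - exists (/ INR n); split; [right; tauto|].
    apply Rinv_0_lt_compat, lt_0_INR; lia.
Qed.

Lemma tau1_open_const1 {X : Type} (f : X -> X) : tau1_open f (fun _ => 1).
Proof.
  split; [intros x; lra|right].
  exists (fun n => n = 1%nat); split; [intros n ->; lia|intros x].
  apply fsup_max.
  - exists 1%nat; split; [reflexivity|apply A_val_1; reflexivity].
  - intros r [n [-> Hr]]; apply A_val_1 in Hr; lra.
Qed.

Lemma tau1_open_periodic_invariant {X : Type} (f : X -> X) mu x1 x2 :
  tau1_open f mu -> (periodic f x1 <-> periodic f x2) -> mu x1 = mu x2.
Proof.
  intros [_ [H0|[S [_ Hs]]]] Hp; [rewrite !H0; reflexivity|].
  apply (fsup_unique _ _ _ (Hs x1)), (fsup_ext _ _ _) with (2 := Hs x2).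
  intros r; unfold A_val; split; intros [n [Sn Hn]]; exists n; tauto.
Qed.

Lemma tau1_open_periodic_max {X : Type} (f : X -> X) mu x z :
  tau1_open f mu -> periodic f x -> mu z <= mu x.
Proof.
  intros [Hfz [H0|[S [_ Hs]]]] Px; [rewrite !H0; lra|].
  destruct (Req_dec (mu z) 0) as [Hz|Hz]; [rewrite Hz; apply Hfz|].
  destruct (fsup_inhabited _ _ (Hs z) Hz) as [r [n [Sn _]]].
  apply Rle_trans with 1; [apply Hfz|].
  apply (fsup_ge _ _ _ (Hs x)); exists n; split; [exact Sn|left; tauto].
Qed.

Lemma tau1_open_pos {X : Type} (f : X -> X) mu x z :
  tau1_open f mu -> 0 < mu x -> 0 < mu z.
Proof.
  intros [_ [H0|[S [HS Hs]]]] Hx; [rewrite H0 in Hx; lra|].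
  destruct (fsup_inhabited _ _ (Hs x) ltac:(lra)) as [r [n [Sn _]]].
  destruct (A_val_pos f n z (HS n Sn)) as [r' [Hr' Pr']].
  apply Rlt_le_trans with r'; [exact Pr'|].
  apply (fsup_ge _ _ _ (Hs z)); exists n; split; assumption.
Qed.

Lemma fimage_unique {X : Type} (f : X -> X) mu nu1 nu2 :
  fimage f mu nu1 -> fimage f mu nu2 -> nu1 = nu2.
Proof.
  intros H1 H2; apply functional_extensionality; intros y.
  exact (fsup_unique _ _ _ (H1 y) (H2 y)).
Qed.

Lemma fimage_surjective_open {X : Type} (f : X -> X) mu :
  (forall y, exists x, f x = y) -> tau1_open f mu -> fimage f mu mu.
Proof.
  intros Honto Hmu y; apply fsup_max.
  - destruct (surjective_preimage_same_periodicity f y Honto) as [x [Hx Hp]].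
    exists x; split; [exact Hx|].
    symmetry; apply (tau1_open_periodic_invariant f mu x y Hmu Hp).
  - intros r [x [Hx ->]]; destruct (classic (periodic f y)) as [Py|Py].
    + apply (tau1_open_periodic_max f mu y x Hmu Py).
    + right; apply (tau1_open_periodic_invariant f mu x y Hmu).
      split; [intros Px; subst y; apply periodic_f, Px|tauto].
Qed.

Definition range_indicator {X : Type} (f : X -> X) (y : X) : R :=
  if excluded_middle_informative (exists x, f x = y) then 1 else 0.

Lemma fimage_const1 {X : Type} (f : X -> X) :
  fimage f (fun _ => 1) (range_indicator f).
Proof.
  intros y; unfold range_indicator.
  destruct (excluded_middle_informative (exists x, f x = y)) as [[x Hx]|Hn].
  - apply fsup_max; [exists x; split; [exact Hx|reflexivity]|].
    intros r [_ [_ ->]]; lra.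
  - right; split; [|reflexivity].
    intros [r [x [Hx _]]]; apply Hn; exists x; exact Hx.
Qed.

Lemma range_indicator_image {X : Type} (f : X -> X) x : range_indicator f (f x) = 1.
Proof.
  unfold range_indicator; destruct (excluded_middle_informative _) as [_|Hn]; [reflexivity|].
  exfalso; apply Hn; exists x; reflexivity.
Qed.

Lemma range_indicator_pos {X : Type} (f : X -> X) y :
  0 < range_indicator f y -> exists x, f x = y.
Proof.
  unfold range_indicator; destruct (excluded_middle_informative _) as [He|_]; [easy|lra].
Qed.

Theorem theorem2p7 (X : Type) (HX : inhabited X) (f : X -> X) :
  (forall y : X, exists x : X, f x = y) <-> tau1_open_map f.
Proof.
  split.
  - intros Honto mu nu Hmu Him.
    rewrite (fimage_unique f mu nu mu Him (fimage_surjective_open f mu Honto Hmu)).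
    exact Hmu.
  - intros Hopen y; destruct HX as [x0].
    pose proof (Hopen _ _ (tau1_open_const1 f) (fimage_const1 f)) as Hnu.
    apply range_indicator_pos, (tau1_open_pos f _ (f x0) y Hnu).
    rewrite range_indicator_image; lra.
Qed.
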